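(* Let $X$ be a finite alphabet with at least two letters and $k\ge2$. For every $F\in\mathcal F_{\mathcal T_k}$, the class $\mathcal R\mathbf\Sigma(F)$ is closed under $\le_{DA}$ and the class $\mathcal A\mathbf\Sigma(F)$ is closed under $\le_{AA}$; that is, if $B\le_{DA}A\in\mathcal R\mathbf\Sigma(F)$ then $B\in\mathcal R\mathbf\Sigma(F)$, and if $B\le_{AA}A\in\mathcal A\mathbf\Sigma(F)$ then $B\in\mathcal A\mathbf\Sigma(F)$.
   Context: $\bar k=\{0,\dots,k-1\}$; $\mathcal R$ ($\mathcal A$) is the class of regular (aperiodic) $\omega$-languages over $X$ (recognised by deterministic Muller acceptors, resp. with aperiodic automaton). Forests are finite $F\subseteq\omega^+$ closed under nonempty prefixes (prefix order), trees finite prefix-closed $V\subseteq\omega^*$; $\mathcal T_k$ = $\bar k$-labeled trees; $\mathcal F_{\mathcal T_k}$ = forests $(F,c)$ labeled by elements of $\mathcal T_k$. For a 2-base $\mathcal L=(\mathcal L_0,\mathcal L_1)$ in $S$ and $(F,c)\in\mathcal F_{\mathcal T_k}$, an $F$-family is $\{U_\tau\}_{\tau\in F}\subseteq\mathcal L_0$ with $U_{\tau i}\subseteq U_\tau$, $\bigcup U_\tau=S$, together with, for each $\tau$ with $c(\tau)=(V,v)$, sets $U_{\tau\sigma}=\tilde U_\tau\cap B_{\tau\sigma}$, $B_{\tau\sigma}\in\mathcal L_1$, $\sigma\in V$, with $U_{\tau\sigma i}\subseteq U_{\tau\sigma}$ and $\bigcup_\sigma U_{\tau\sigma}=\tilde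 U_\tau$, where $\tilde U_\tau=U_\tau\setminus\bigcup_{\tau i\in F}U_{\tau i}$; it determines $A:S\to\bar k$ if $A(x)=v(\sigma)$ whenever $x\in U_{\tau\sigma}\setminus\bigcup_{\sigma i\in V}U_{\tau\sigma i}$. $\mathcal L(F)$ is the set of $k$-partitions determined by some $F$-family. $\mathcal R\mathbf\Sigma=(\mathcal R\cap\mathbf\Sigma^0_1,\mathcal R\cap\mathbf\Sigma^0_2)$ and $\mathcal A\mathbf\Sigma=(\mathcal A\cap\mathbf\Sigma^0_1,\mathcal A\cap\mathbf\Sigma^0_2)$, where $\mathbf\Sigma^0_1$ are the open sets and $\mathbf\Sigma^0_2$ the countable unions of closed sets of $X^\omega$. DA-functions (AA-functions) are functions $X^\omega\to X^\omega$ computed by asynchronous transducers (automaton plus output $g:Q\times X\to X^*$; with aperiodic automaton for AA); $B\le_{DA}A$ ($B\le_{AA}A$) iff $B=A\circ h$ for some such $h$. *)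

From mathcomp Require Import all_boot.
Set Implicit Arguments.
Unset Strict Implicit.
Unset Printing Implicit Defensive.

Definition word (X : finType) := nat -> X.
Definition olang (X : finType) := word X -> Prop.

Definition is_open (X : finType) (U : olang X) : Prop :=
  forall a, U a -> exists n, forall b : word X, (forall i, i < n -> b i = a i) -> U b.
Definition is_closed (X : finType) (C : olang X) : Prop :=
  is_open (fun a => ~ C a).
Definition is_sigma02 (X : finType) (U : olang X) : Prop :=
  exists C : nat -> olang X, (forall n, is_closed (C n)) /\
    forall a, U a <-> exists n, C n a.

Fixpoint run (X Q : finType) (delta : Q -> X -> Q) (q0 : Q) (a : word X) (n : nat) : Q :=
  match n with 0 => q0 | m.+1 => delta (run delta q0 a m) (a m) end.

Definition inf_often (Q : finType) (r : nat -> Q) (q : Q) : Prop :=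
  forall n, exists m, n <= m /\ r m = q.

Definition muller_accepts (Q : finType) (Acc : {set {set Q}}) (r : nat -> Q) : Prop :=
  exists S, S \in Acc /\ forall q, q \in S <-> inf_often r q.

Definition delta_star (X Q : finType) (delta : Q -> X -> Q) (q : Q) (u : seq X) : Q :=
  foldl delta q u.

(** aperiodic automaton: its transition monoid is aperiodic *)
Definition aperiodic (X Q : finType) (delta : Q -> X -> Q) : Prop :=
  exists n, forall (u : seq X) (q : Q),
    delta_star delta q (flatten (nseq n u)) = delta_star delta q (flatten (nseq n.+1 u)).

Definition regular (X : finType) (L : olang X) : Prop :=
  exists (Q : finType) (q0 : Q) (delta : Q -> X -> Q) (Acc : {set {set Q}}),
    forall a, L a <-> muller_accepts Acc (run delta q0 a).

Definition aperiodic_lang (X : finType) (L : olang X) : Prop :=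
  exists (Q : finType) (q0 : Q) (delta : Q -> X -> Q) (Acc : {set {set Q}}),
    aperiodic delta /\ forall a, L a <-> muller_accepts Acc (run delta q0 a).

Definition tout (X Q : finType) (delta : Q -> X -> Q) (g : Q -> X -> seq X)
  (q0 : Q) (a : word X) (m : nat) : seq X :=
  flatten [seq g (run delta q0 a i) (a i) | i <- iota 0 m].

Definition computes (X Q : finType) (delta : Q -> X -> Q) (g : Q -> X -> seq X)
  (q0 : Q) (h : word X -> word X) : Prop :=
  forall a n, exists m, onth (tout delta g q0 a m) n = Some (h a n).

Definition DA_fun (X : finType) (h : word X -> word X) : Prop :=
  exists (Q : finType) (q0 : Q) (delta : Q -> X -> Q) (g : Q -> X -> seq X),
    computes delta g q0 h.

Definition AA_fun (X : finType) (h : word X -> word X) : Prop :=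
  exists (Q : finType) (q0 : Q) (delta : Q -> X -> Q) (g : Q -> X -> seq X),
    aperiodic delta /\ computes delta g q0 h.

Definition le_DA (X : finType) (k : nat) (B A : word X -> 'I_k) : Prop :=
  exists h, DA_fun h /\ B = A \o h.
Definition le_AA (X : finType) (k : nat) (B A : word X -> 'I_k) : Prop :=
  exists h, AA_fun h /\ B = A \o h.

(** A k-labeled tree: a finite prefix-closed V (list of seq nat) and labels
    v : V -> 'I_k (values outside V are irrelevant). *)
Record ltree (k : nat) := LTree { lt_dom : seq (seq nat); lt_lab : seq nat -> 'I_k }.

Definition is_tree (V : seq (seq nat)) : Prop :=
  forall (s : seq nat) (i : nat), rcons s i \in V -> s \in V.

Definition is_forest (F : seq (seq nat)) : Prop :=
  (forall s, s \in F -> s != [::]) /\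
  (forall (s : seq nat) (i : nat), rcons s i \in F -> s != [::] -> s \in F).

Definition is_lforest (k : nat) (F : seq (seq nat)) (c : seq nat -> ltree k) : Prop :=
  is_forest F /\ forall t, t \in F -> is_tree (lt_dom (c t)).

Definition determines (X : finType) (k : nat) (L0 L1 : olang X -> Prop)
  (F : seq (seq nat)) (c : seq nat -> ltree k) (A : word X -> 'I_k) : Prop :=
  exists (U : seq nat -> olang X) (B : seq nat -> seq nat -> olang X),
    let Ut t x := U t x /\ ~ (exists i, rcons t i \in F /\ U (rcons t i) x) in
    let W t s x := Ut t x /\ B t s x in
    (forall t, t \in F -> L0 (U t)) /\
        (forall t i x, t \in F -> rcons t i \in F -> U (rcons t i) x -> U t x) /\
        (forall x, exists t, t \in F /\ U t x) /\
        (forall t s, t \in F -> s \in lt_dom (c t) -> L1 (B t s)) /\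
        (forall t s i x, t \in F -> s \in lt_dom (c t) -> rcons s i \in lt_dom (c t) ->
            W t (rcons s i) x -> W t s x) /\
        (forall t x, t \in F -> (Ut t x <-> exists s, s \in lt_dom (c t) /\ W t s x)) /\
      (forall t s x, t \in F -> s \in lt_dom (c t) -> W t s x ->
            ~ (exists i, rcons s i \in lt_dom (c t) /\ W t (rcons s i) x) ->
            A x = lt_lab (c t) s).

(** R Sigma = (R cap Sigma^0_1, R cap Sigma^0_2), A Sigma likewise *)
Definition RS0 (X : finType) (U : olang X) := regular U /\ is_open U.
Definition RS1 (X : finType) (U : olang X) := regular U /\ is_sigma02 U.
Definition AS0 (X : finType) (U : olang X) := aperiodic_lang U /\ is_open U.
Definition AS1 (X : finType) (U : olang X) := aperiodic_lang U /\ is_sigma02 U.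

Definition RSigmaF (X : finType) (k : nat) (F : seq (seq nat)) (c : seq nat -> ltree k)
  (A : word X -> 'I_k) : Prop := determines (@RS0 X) (@RS1 X) F c A.
Definition ASigmaF (X : finType) (k : nat) (F : seq (seq nat)) (c : seq nat -> ltree k)
  (A : word X -> 'I_k) : Prop := determines (@AS0 X) (@AS1 X) F c A.

From mathcomp Require Import all_boot.
From mathcomp Require Import zify boolp.

Set Implicit Arguments.
Unset Strict Implicit.
Unset Printing Implicit Defensive.

(* A DA-function h is continuous, since every output letter is produced after
   reading a finite prefix of the input; so preimages under h of open, closed
   and Sigma^0_2 sets are again such sets.  If a deterministic Muller automaton
   gam recognises L, then the preimage of L is recognised by the product of the
   transducer with gam, whose states also record the set of gam-states visited
   while reading the output of the last transition: the states of gam recurring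
   on h a are exactly those recorded by product states recurring on a.  When
   the transducer and gam are aperiodic, so is the product.  Hence an F-family
   for A pulls back along h to an F-family of the same kind for A \o h; neither
   the shape of F nor the sizes of X and k play any role. *)

Lemma delta_star_cat (X Q : finType) (delta : Q -> X -> Q) q s1 s2 :
  delta_star delta q (s1 ++ s2) = delta_star delta (delta_star delta q s1) s2.
Proof. exact: foldl_cat. Qed.

Lemma eq_run (X Q : finType) (delta : Q -> X -> Q) q0 (a b : word X) m :
  (forall i, i < m -> a i = b i) -> run delta q0 a m = run delta q0 b m.
Proof. by elim: m => //= m IH eq_ab; rewrite IH ?eq_ab // => i lt_im; apply: eq_ab; lia. Qed.

Lemma delta_star_run (X Q : finType) (delta : Q -> X -> Q) q0 (b : word X) x0 s :
  (forall i, i < size s -> nth x0 s i = b i) ->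
  delta_star delta q0 s = run delta q0 b (size s).
Proof.
elim/last_ind: s => [//|s x IH] eq_sb.
have ->: x = b (size s) by rewrite -eq_sb ?size_rcons // nth_rcons ltnn eqxx.
rewrite -cats1 delta_star_cat size_cat addn1 /= IH // => i lt_is.
by rewrite -eq_sb ?nth_rcons ?lt_is // size_rcons; lia.
Qed.

Lemma delta_star_nseq_stable (X Q : finType) (delta : Q -> X -> Q) N :
  (forall u q, delta_star delta q (flatten (nseq N u)) =
               delta_star delta q (flatten (nseq N.+1 u))) ->
  forall m u q, N <= m ->
  delta_star delta q (flatten (nseq m u)) = delta_star delta q (flatten (nseq N u)).
Proof.
move=> stableN m u q /subnK <-; elim: (m - N) => [//|d IH].
by rewrite addSn -addnS nseqD flatten_cat delta_star_cat -stableN -delta_star_cat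
  -flatten_cat -nseqD.
Qed.

Section Transducer.
Variables (X Q : finType) (delta : Q -> X -> Q) (g : Q -> X -> seq X) (q0 : Q).
Local Notation out := (tout delta g q0).

Lemma toutS a m : out a m.+1 = out a m ++ g (run delta q0 a m) (a m).
Proof. by rewrite /tout -addn1 iotaD map_cat flatten_cat /= cats0. Qed.

Lemma tout_prefix a m d : exists w, out a (m + d) = out a m ++ w.
Proof.
elim: d => [|d [w IH]]; first by exists [::]; rewrite addn0 cats0.
by exists (w ++ g (run delta q0 a (m + d)) (a (m + d))); rewrite addnS toutS IH catA.
Qed.

Lemma leq_size_tout a m m' : m <= m' -> size (out a m) <= size (out a m').
Proof.
move/subnKC <-; have [w ->] := tout_prefix a m (m' - m).
by rewrite size_cat leq_addr.
Qed.

Lemma eq_tout a b m : (forall i, i < m -> a i = b i) -> out a m = out b m.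
Proof.
elim: m => // m IH eq_ab.
have eq_ab' i : i < m -> a i = b i by move=> lt_im; apply: eq_ab; lia.
by rewrite !toutS IH // (eq_run _ _ eq_ab') eq_ab.
Qed.

Variable h : word X -> word X.
Hypothesis computes_h : computes delta g q0 h.

Lemma nth_tout a m i x0 : i < size (out a m) -> nth x0 (out a m) i = h a i.
Proof.
move=> lt_i; have [m' out_i] := computes_h a i.
have lt_i' : i < size (out a m') by rewrite -onthTE out_i.
have [w1 E1] := tout_prefix a m m'; have [w2 E2] := tout_prefix a m' m.
have : onth (out a m ++ w1) i = onth (out a m' ++ w2) i by rewrite -E1 -E2 addnC.
by rewrite !onth_cat lt_i lt_i' out_i => /(onth_nth x0).
Qed.

Lemma tout_unbounded a n : exists m, n <= size (out a m).
Proof.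
have [m out_n] := computes_h a n; exists m.
by apply: ltnW; rewrite -onthTE out_n.
Qed.

Lemma tout_step_cover a n j : size (out a n) < j ->
  exists2 m, n <= m & size (out a m) < j <= size (out a m.+1).
Proof.
move=> lt_nj; have /ex_minnP[m' le_jm' min_m'] := tout_unbounded a j.
have lt_nm' : n < m'.
  by rewrite ltnNge; apply/negP => /(leq_size_tout a); lia.
exists m'.-1; first lia.
rewrite prednK ?le_jm' ?andbT; last lia.
by rewrite ltnNge; apply/negP => /min_m'; lia.
Qed.

End Transducer.

Section Continuity.
Variables (X : finType) (h : word X -> word X).
Hypothesis DA_h : DA_fun h.

Lemma open_comp_DA (U : olang X) : is_open U -> is_open (U \o h).
Proof.
have [Q [q0 [delta [g computes_h]]]] := DA_h.
move=> openU a /openU [n Un]; have [m le_nm] := tout_unbounded computes_h a n.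
exists m => b eq_ba; apply: Un => i lt_in.
have lt_im : i < size (tout delta g q0 b m) by rewrite (eq_tout _ _ _ eq_ba); lia.
rewrite -(nth_tout computes_h (a 0) lt_im) (eq_tout _ _ _ eq_ba) (nth_tout computes_h) //.
exact: leq_trans lt_in le_nm.
Qed.

Lemma closed_comp_DA (C : olang X) : is_closed C -> is_closed (C \o h).
Proof. exact: (@open_comp_DA (fun x => ~ C x)). Qed.

Lemma sigma02_comp_DA (U : olang X) : is_sigma02 U -> is_sigma02 (U \o h).
Proof.
move=> [C [closedC U_C]]; exists (fun n => C n \o h); split => [n|a].
  exact: closed_comp_DA.
exact: U_C.
Qed.

End Continuity.

Definition inf_set (Z : finType) (r : nat -> Z) : {set Z} := [set z | `[< inf_often r z >]].

Lemma muller_acceptsE (Z : finType) (Acc : {set {set Z}}) r :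
  muller_accepts Acc r <-> inf_set r \in Acc.
Proof.
split => [[S [AccS S_r]] | Acc_r]; last first.
  by exists (inf_set r); split=> // z; rewrite inE; split => /asboolP.
suff ->: inf_set r = S by [].
by apply/setP => z; rewrite inE; apply/asboolP/idP => /S_r.
Qed.

Lemma inf_often_pigeonhole (Z : finType) (r : nat -> Z) (p : pred Z) :
  (forall n, exists2 m, n <= m & p (r m)) -> exists2 z, p z & inf_often r z.
Proof.
move=> p_r; apply: contrapT => no_z.
have bound z : exists n, p z -> forall m, n <= m -> r m != z.
  case: (boolP (p z)) => [pz|]; last by exists 0.
  have /existsNP[n not_after_n] : ~ inf_often r z by move=> inf_z; apply: no_z; exists z.
  by exists n => _ m le_nm; apply/eqP => rm_z; apply: not_after_n; exists m.
have [f f_bound] := choice bound.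
have [m le_m p_rm] := p_r (\max_(z : Z) f z).
by have := f_bound _ p_rm m (leq_trans (leq_bigmax (r m)) le_m); rewrite eqxx.
Qed.

Section Product.
Variables (X Q P : finType) (delta : Q -> X -> Q) (g : Q -> X -> seq X).
Variable gam : P -> X -> P.

Fixpoint visited (p : P) (s : seq X) : {set P} :=
  if s is x :: s' then gam p x |: visited (gam p x) s' else set0.

Lemma visitedP p0 (b : word X) n x0 s p :
  (forall i, i < size s -> nth x0 s i = b (n + i)) ->
  p \in visited (run gam p0 b n) s <->
  exists2 j, n < j <= n + size s & run gam p0 b j = p.
Proof.
elim: s n => [|x s IH] n /= eq_sb.
  by rewrite in_set0; split => // -[j]; lia.
have ->: gam (run gam p0 b n) x = run gam p0 b n.+1.
  by have := eq_sb 0; rewrite addn0 /= => <-.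
have eq_sb' i : i < size s -> nth x0 s i = b (n.+1 + i).
  by move=> lt_is; rewrite addSnnS -eq_sb.
rewrite in_setU1; split.
  case/orP => [/eqP -> | /(IH _ eq_sb') [j lt_j <-]]; first by exists n.+1 => //; lia.
  by exists j => //; lia.
move=> [j lt_j run_j]; have [j_n | ne_j] := eqVneq j n.+1.
  by rewrite -run_j j_n eqxx.
by apply/orP; right; apply/(IH _ eq_sb'); exists j => //; lia.
Qed.

Definition prod_state := (Q * P * {set P})%type.

Definition prod_delta (t : prod_state) (x : X) : prod_state :=
  (delta t.1.1 x, delta_star gam t.1.2 (g t.1.1 x), visited t.1.2 (g t.1.1 x)).

Definition prod_acc (Acc : {set {set P}}) : {set {set prod_state}} :=
  [set S : {set prod_state} | \bigcup_(t in S) t.2 \in Acc].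

Fixpoint outs (q : Q) (u : seq X) : seq X :=
  if u is x :: u' then g q x ++ outs (delta q x) u' else [::].

Lemma outs_cat q u v : outs q (u ++ v) = outs q u ++ outs (delta_star delta q u) v.
Proof. by elim: u q => [|x u IH] q //=; rewrite IH catA. Qed.

Lemma outs_nseq q u : delta_star delta q u = q ->
  forall j, outs q (flatten (nseq j u)) = flatten (nseq j (outs q u)).
Proof. by move=> fix_q; elim => [|j IH] //=; rewrite outs_cat fix_q IH. Qed.

Lemma delta_star_prod_fst t u : (delta_star prod_delta t u).1 =
  (delta_star delta t.1.1 u, delta_star gam t.1.2 (outs t.1.1 u)).
Proof.
elim: u t => [|x u IH] [[q p] S] //=.
by rewrite [LHS]IH /= delta_star_cat.
Qed.

(* The recorded set is overwritten by every letter. *)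
Lemma delta_star_prod_fst_eq t1 t2 w : t1.1 = t2.1 -> w != [::] ->
  delta_star prod_delta t1 w = delta_star prod_delta t2 w.
Proof. by case: w => [//|x w] eq_t _; rewrite /delta_star /= /prod_delta eq_t. Qed.

Lemma aperiodic_prod : aperiodic delta -> aperiodic gam -> aperiodic prod_delta.
Proof.
move=> [N stableN] [M stableM]; exists (N + M).+1 => u t.
have [-> | nz_u] := eqVneq u [::].
  have fl_nil n : flatten (nseq n [::]) = [::] :> seq X by elim: n.
  by rewrite !fl_nil.
have flS m : flatten (nseq m.+1 u) = flatten (nseq m u) ++ u.
  by rewrite -addn1 nseqD flatten_cat /= cats0.
have powS m : delta_star prod_delta t (flatten (nseq m.+1 u)) =
              delta_star prod_delta (delta_star prod_delta t (flatten (nseq m u))) u.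
  by rewrite flS delta_star_cat.
(* After N copies of u the transducer sits in a state qN fixed by u, so further
   copies feed gam powers of the single word outs qN u. *)
pose qN := delta_star delta t.1.1 (flatten (nseq N u)).
have fix_qN : delta_star delta qN u = qN by rewrite -delta_star_cat -flS -stableN.
have fst_pow m : (delta_star prod_delta t (flatten (nseq (N + m) u))).1 =
    (qN, delta_star gam (delta_star gam t.1.2 (outs t.1.1 (flatten (nseq N u))))
                    (flatten (nseq m (outs qN u)))).
  rewrite delta_star_prod_fst (delta_star_nseq_stable stableN) ?leq_addr //.
  by rewrite nseqD flatten_cat outs_cat (outs_nseq fix_qN) delta_star_cat.
have fst_stable : (delta_star prod_delta t (flatten (nseq (N + M) u))).1 =
                  (delta_star prod_delta t (flatten (nseq (N + M).+1 u))).1.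
  by rewrite -addnS !fst_pow stableM.
rewrite (powS (N + M)) (powS (N + M).+1).
exact: delta_star_prod_fst_eq fst_stable nz_u.
Qed.

Section Run.
Variables (q0 : Q) (p0 : P) (h : word X -> word X).
Hypothesis computes_h : computes delta g q0 h.
Local Notation out := (tout delta g q0).
Local Notation prod_run a := (run prod_delta (q0, p0, set0) a).

Lemma run_prod_fst a m : (prod_run a m).1 = (run delta q0 a m, delta_star gam p0 (out a m)).
Proof. by elim: m => //= m IH; rewrite /prod_delta IH /= toutS delta_star_cat. Qed.

Lemma mem_run_prod_snd a m p : p \in (prod_run a m.+1).2 <->
  exists2 j, size (out a m) < j <= size (out a m.+1) & run gam p0 (h a) j = p.
Proof.
rewrite /= /prod_delta run_prod_fst /=.
rewrite (@delta_star_run _ _ _ _ (h a) (h a 0)) => [|i]; last exact: nth_tout.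
rewrite toutS size_cat; apply: (@visitedP p0 (h a) _ (h a 0)) => i lt_i.
have lt_mi : size (out a m) + i < size (out a m.+1) by rewrite toutS size_cat ltn_add2l.
by rewrite -(nth_tout computes_h (h a 0) lt_mi) toutS nth_cat ltnNge leq_addr addKn.
Qed.

Lemma inf_set_prod_run a :
  inf_set (run gam p0 (h a)) = \bigcup_(t in inf_set (prod_run a)) t.2.
Proof.
apply/setP => p; rewrite inE; apply/asboolP/bigcupP.
  move=> inf_p.
  have [|t p_t inf_t] := @inf_often_pigeonhole _ (prod_run a) (fun t => p \in t.2).
    move=> n; have [j [lt_j <-]] := inf_p (size (out a n)).+1.
    have [m le_nm cover_j] := tout_step_cover computes_h lt_j.
    by exists m.+1; [lia | apply/mem_run_prod_snd; exists j].
  by exists t => //; rewrite inE; apply/asboolP.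
move=> [t]; rewrite inE => /asboolP inf_t p_t n.
have [M le_nM] := tout_unbounded computes_h a n.
have [[|m] [le_m run_t]] := inf_t M.+1; first by [].
move: p_t; rewrite -run_t => /mem_run_prod_snd [j lt_j run_j].
by exists j; split => //; have := leq_size_tout delta g q0 a (m := M) (m' := m); lia.
Qed.

Lemma muller_accepts_prod (Acc : {set {set P}}) a :
  muller_accepts Acc (run gam p0 (h a)) <-> muller_accepts (prod_acc Acc) (prod_run a).
Proof. by rewrite !muller_acceptsE inE inf_set_prod_run. Qed.

End Run.
End Product.

Section Recognisability.
Variables (X : finType) (h : word X -> word X).

Lemma regular_comp_DA (L : olang X) : DA_fun h -> regular L -> regular (L \o h).
Proof.
move=> [Q [q0 [delta [g computes_h]]]] [P [p0 [gam [Acc L_Acc]]]].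
exists (prod_state Q P), (q0, p0, set0), (prod_delta delta g gam), (prod_acc Q Acc) => a.
exact: iff_trans (L_Acc (h a)) (muller_accepts_prod gam p0 computes_h Acc a).
Qed.

Lemma aperiodic_lang_comp_AA (L : olang X) :
  AA_fun h -> aperiodic_lang L -> aperiodic_lang (L \o h).
Proof.
move=> [Q [q0 [delta [g [ap_delta computes_h]]]]] [P [p0 [gam [Acc [ap_gam L_Acc]]]]].
exists (prod_state Q P), (q0, p0, set0), (prod_delta delta g gam), (prod_acc Q Acc).
split => [|a]; first exact: aperiodic_prod.
exact: iff_trans (L_Acc (h a)) (muller_accepts_prod gam p0 computes_h Acc a).
Qed.

Lemma AA_fun_DA : AA_fun h -> DA_fun h.
Proof. by move=> [Q [q0 [delta [g [_ computes_h]]]]]; exists Q, q0, delta, g. Qed.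

End Recognisability.

Lemma determines_comp (X : finType) k (L0 L1 L0' L1' : olang X -> Prop) F
    (c : seq nat -> ltree k) A (h : word X -> word X) :
  (forall V, L0 V -> L0' (V \o h)) -> (forall V, L1 V -> L1' (V \o h)) ->
  determines L0 L1 F c A -> determines L0' L1' F c (A \o h).
Proof.
move=> L0_h L1_h [U [B /=]] [L0U [U_sub [U_cover [L1B [W_sub [W_cover A_W]]]]]].
exists (fun t => U t \o h), (fun t s => B t s \o h) => /=.
do 6?[split; first by eauto].
by move=> t s x; apply: A_W.
Qed.

Theorem proposition4p12 (X : finType) (k : nat) (hX : 2 <= #|X|) (hk : 2 <= k)
  (F : seq (seq nat)) (c : seq nat -> ltree k) (hF : is_lforest F c) :
  (forall A B : word X -> 'I_k, le_DA B A -> RSigmaF F c A -> RSigmaF F c B) /\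
  (forall A B : word X -> 'I_k, le_AA B A -> ASigmaF F c A -> ASigmaF F c B).
Proof.
split => A B [h [fun_h ->]]; apply: determines_comp => V [rec_V top_V].
- by split; [apply: regular_comp_DA | apply: open_comp_DA].
- by split; [apply: regular_comp_DA | apply: sigma02_comp_DA].
- by split; [apply: aperiodic_lang_comp_AA | apply/open_comp_DA/top_V/AA_fun_DA].
- by split; [apply: aperiodic_lang_comp_AA | apply/sigma02_comp_DA/top_V/AA_fun_DA].
Qed.
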